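(* Let $G$ be a non-cyclic finite group of order $n$ and let $q$ be the smallest prime divisor of $n$. Then $$\psi(G)\leq \frac{(n-1)n}{q}+1<\frac{n^2}{q}.$$
   Context: For a finite group $G$, $\psi(G)=\sum_{g\in G} o(g)$ denotes the sum of the orders of all elements of $G$. *)

From mathcomp Require Import all_boot all_order all_algebra all_fingroup all_solvable.
Set Implicit Arguments. Unset Strict Implicit. Unset Printing Implicit Defensive.

Definition psi (gT : finGroupType) (G : {set gT}) : nat := \sum_(g in G) #[g]%g.

(* In a non-cyclic group of order n, no element has order n, so every element
   order is a proper divisor of n and hence at most n / q.  Bounding the n - 1
   non-trivial elements this way and the identity by 1 gives
   psi(G) <= (n - 1) n / q + 1; the strict inequality reduces to q < n, which
   holds because a group of prime order is cyclic. *)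

From mathcomp Require Import all_boot all_order all_algebra all_fingroup all_solvable.
From mathcomp Require Import zify.
Import Order.TTheory GRing.Theory Num.Theory.

Lemma pdiv_mul_dvd_ltn d n : d %| n -> d < n -> pdiv n * d <= n.
Proof.
move=> dv_dn lt_dn; have d_gt0 : 0 < d by case: d dv_dn lt_dn => //; lia.
have index_gt1 : 1 < n %/ d by rewrite ltn_divRL // mul1n.
rewrite -[leqRHS](divnK dv_dn) leq_mul2r.
by rewrite pdiv_min_dvd ?dvdn_div ?orbT.
Qed.

Section NonCyclic.

Variables (gT : finGroupType) (G : {group gT}).
Hypothesis ncycG : ~~ cyclic G.

Lemma order_ltn_noncyclic g : g \in G -> #[g]%g < #|G|.
Proof.
move=> Gg; rewrite ltn_neqAle (dvdn_leq (cardG_gt0 G) (order_dvdG Gg)) andbT.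
apply: contra ncycG => ord_g; apply/cyclicP; exists g.
by apply/eqP; rewrite eq_sym eqEcard cycle_subG Gg -(eqP ord_g) /=.
Qed.

Lemma card_noncyclic_gt1 : 1 < #|G|.
Proof.
by have := @order_ltn_noncyclic 1%g (group1 G); rewrite order1.
Qed.

Lemma pdiv_ltn_noncyclic : pdiv #|G| < #|G|.
Proof.
rewrite ltn_neqAle pdiv_leq ?cardG_gt0 // andbT.
apply: contra ncycG => /eqP pdivG; apply: prime_cyclic.
by rewrite -pdivG pdiv_prime ?card_noncyclic_gt1.
Qed.

Lemma pdiv_mul_order_leq g : g \in G -> pdiv #|G| * #[g]%g <= #|G|.
Proof.
by move=> Gg; rewrite pdiv_mul_dvd_ltn ?order_dvdG ?order_ltn_noncyclic.
Qed.

Lemma pdiv_mul_psi_leq : pdiv #|G| * psi G <= pdiv #|G| + (#|G| - 1) * #|G|.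
Proof.
rewrite /psi (bigD1 1%g) //= order1 mulnDr muln1 leq_add2l big_distrr /=.
have card_nontriv : #|[pred g in G | g != 1%g]| = #|G| - 1.
  rewrite (cardsD1 1%g G) group1 add1n subn1 /=.
  by apply: eq_card => g; rewrite !inE andbC.
rewrite -card_nontriv -sum_nat_const.
by apply: leq_sum => g /andP[Gg _]; apply: pdiv_mul_order_leq.
Qed.

End NonCyclic.

Local Open Scope ring_scope.

Theorem proposition5 (gT : finGroupType) (G : {group gT}) (n q : nat) :
  ~~ cyclic G -> #|G|%N = n -> q = pdiv n ->
  ((psi G)%:R <= ((n - 1)%N * n)%:R / q%:R + 1 :> rat) /\
  (((n - 1)%N * n)%:R / q%:R + 1 < (n ^ 2)%:R / q%:R :> rat).
Proof.
move=> ncycG cardG def_q.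
have psi_le := pdiv_mul_psi_leq _ _ ncycG; have q_lt_n := pdiv_ltn_noncyclic _ _ ncycG.
rewrite cardG -def_q in psi_le q_lt_n.
have q_gt0 : (0 : rat) < q%:R by rewrite ltr0n def_q pdiv_gt0.
have -> : ((n - 1)%N * n)%:R / q%:R + 1 = (((n - 1) * n + q)%N)%:R / (q%:R : rat).
  by rewrite natrD mulrDl divff // gt_eqF.
split; first by rewrite ler_pdivlMr // -natrM ler_nat mulnC addnC.
rewrite ltr_pM2r ?invr_gt0 // ltr_nat.
have sqr_n : ((n - 1) * n + n = n ^ 2)%N by nia.
by rewrite -sqr_n ltn_add2l.
Qed.
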